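(* Let $P$ be a pre-run of vocabulary $\Upsilon_0^+$ satisfying the Train Motion requirement, and let $A$ be an initial state of the railroad ealgebra whose $\Upsilon_0^+$-reduct equals $P(0)$. Then there is exactly one run $Q$ of the one-module program Controller (over vocabulary $\Upsilon_1^+$, with TrackStatus external and Deadline, Dir internal) such that $Q(0)$ is the $\Upsilon_1^+$-reduct of $A$, the $\Upsilon_0^+$-reduct of $Q(t)$ equals $P(t)$ for all $t\ge0$, and Controller is immediate in $Q$.
   Context: Setting (evolving algebra for the railroad crossing). States are structures over a vocabulary $\Upsilon\cup\{\mathrm{CT}\}$ where $\Upsilon$ contains: a finite universe Tracks; the reals and ExtendedReals $=\mathbb{R}\cup\{\infty\}$ with standard $<$ and $+$ ($\infty$ largest); positive real constants $d_{close},d_{open},d_{min},d_{max}$ with $d_{close}<d_{min}\le d_{max}$; a unary function TrackStatus from Tracks to $\{\text{empty},\text{coming},\text{incrossing}\}$; a unary function Deadline from Tracks to ExtendedReals; a nullary Dir with values in $\{\text{open},\text{close}\}$; a nullary GateStatus with values in $\{\text{opened},\text{closed}\}$; and $\mathrm{CT}$ is a nullary real-valued symbol (current time). Let $\Upsilon_1=\Upsilon\setminus\{\mathrm{GateStatus}\}$, $\Upsilon_0=\Upsilon_1\setminus\{\mathrm{Deadline},\mathrm{Dir}\}$, and $\Upsilon_i^+=\Upsilon_i\cup\{\mathrm{CT}\}$. Put $W=d_{min}-d_{close}$. For a track $x$, SafeToOpen is $\forall x\in\mathrm{Tracks}$ [$\mathrm{TrackStatus}(x)=\text{empty}$ or $\mathrm{CT}+d_{open}<\mathrm{Deadline}(x)$].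 The module Controller executes simultaneously, for every track $x$, SetDeadline$(x)$ ''if TrackStatus$(x)$=coming and Deadline$(x)=\infty$ then Deadline$(x):=\mathrm{CT}+W$'', SignalClose$(x)$ ''if $\mathrm{CT}=$Deadline$(x)$ then Dir:=close'', ClearDeadline$(x)$ ''if TrackStatus$(x)$=empty and Deadline$(x)<\infty$ then Deadline$(x):=\infty$'', together with SignalOpen ''if Dir=close and SafeToOpen then Dir:=open''. Executing it means computing all updates generated in the current state and performing them simultaneously (nothing happens if inconsistent). It is enabled at a state if its update set is consistent and contains an update that changes the state. Runs: for a map $t\mapsto R(t)$, $t\in[0,\infty)$, to states of a vocabulary $V\cup\{\mathrm{CT}\}$, let $\rho(t)$ be the reduct to $V$. $R$ is a pre-run if all $R(t)$ share a superuniverse, $\mathrm{CT}=t$ in $R(t)$, and for every $\tau>0$ there are $0=t_0<\dots<t_n=\tau$ with $\rho$ constant on each $(t_i,t_{i+1})$; $\rho(t+)$, $\rho(t-)$ are the one-sided constant values. A pre-run is a run of a program if (i) whenever $\rho(t+)\neq\rho(t)$, $\rho(t+)$ is the $V$-reduct of the result of executing some of its modules at $R(t)$ (these fire at $t$), with external functions equal in $\rho(t)$ and $\rho(t+)$; (ii) whenever $t>0$ and $\rho(t)\ne\rho(t-)$, they differ only in external functions. An agent is immediate if it fires at every moment at which it is enabled. Initial states: TrackStatus$(x)$=empty and Deadline$(x)=\infty$ for every track $x$. Train Motion requirement for $P$: for each track $x$ there is a finite or infinite sequence $0=t_0<t_1<t_2<\cdots$ with TrackStatus$(x)$=empty over each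 $[t_{3i},t_{3i+1})$, =coming over each $[t_{3i+1},t_{3i+2})$ where $d_{min}\le t_{3i+2}-t_{3i+1}\le d_{max}$, =incrossing over each $[t_{3i+2},t_{3i+3})$, and, if the sequence is finite with last element $t_k$, then $3\mid k$ and TrackStatus$(x)$=empty over $[t_k,\infty)$. *)

From HB Require Import structures.
From mathcomp Require Import all_boot all_order all_algebra.
From mathcomp Require Import reals.
Set Implicit Arguments. Unset Strict Implicit. Unset Printing Implicit Defensive.
Import Order.TTheory GRing.Theory Num.Theory.
Local Open Scope ring_scope.

Inductive status := empty | coming | incrossing.
Inductive direction := open | close.

Inductive ext (R : Type) := Fin of R | Inf.
Arguments Inf {R}.

Definition lt_ext (R : realType) (a b : ext R) : Prop :=
  match a, b with
  | Fin x, Fin y => x < y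
  | Fin _, Inf => True
  | Inf, _ => False
  end.

Section Railroad.
Variables (R : realType) (T : finType).

(* Reduct to Upsilon_1 (without CT) of a state: TrackStatus, Deadline, Dir.
   Tracks, the reals and the constants are static and fixed as parameters. *)
Record state1 := State1 {
  TrackStatus : {ffun T -> status};
  Deadline : {ffun T -> ext R};
  Dir : direction }.

Inductive gatestatus := opened | closed.
Record fullState := FullState {
  fTrackStatus : {ffun T -> status};
  fDeadline : {ffun T -> ext R};
  fDir : direction;
  fGateStatus : gatestatus;
  fCT : R }.

Definition initial (A : fullState) : Prop :=
  forall x, fTrackStatus A x = empty /\ fDeadline A x = Inf.

Definition reduct1 (A : fullState) : state1 :=
  State1 (fTrackStatus A) (fDeadline A) (fDir A).

Definition piecewise_const (X : Type) (f : R -> X) : Prop :=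
  forall tau : R, 0 < tau ->
    exists s : seq R, sorted <%R (0 :: s) /\ last 0 s = tau /\
      forall i, (i < size s)%N ->
        forall u v, nth 0 (0 :: s) i < u < nth 0 (0 :: s) i.+1 ->
                    nth 0 (0 :: s) i < v < nth 0 (0 :: s) i.+1 -> f u = f v.

Definition right_val (X : Type) (f : R -> X) (t : R) (x : X) : Prop :=
  exists2 e : R, 0 < e & forall u, t < u < t + e -> f u = x.
Definition left_val (X : Type) (f : R -> X) (t : R) (x : X) : Prop :=
  exists2 e : R, 0 < e & forall u, t - e < u < t -> f u = x.

Definition train_motion (dmin dmax : R) (P : R -> {ffun T -> status}) : Prop :=
  forall x : T, exists (t : nat -> R) (N : option nat),
    let inr j := match N with None => true | Some k => (j <= k)%N end in
    t 0%N = 0 /\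
    (forall j, inr j.+1 -> t j < t j.+1) /\
    (forall i, inr (3 * i).+1 -> forall u, t (3 * i)%N <= u < t (3 * i).+1 ->
        P u x = empty) /\
    (forall i, inr (3 * i).+2 ->
        dmin <= t (3 * i).+2 - t (3 * i).+1 <= dmax /\
        forall u, t (3 * i).+1 <= u < t (3 * i).+2 -> P u x = coming) /\
    (forall i, inr (3 * i).+3 -> forall u, t (3 * i).+2 <= u < t (3 * i).+3 ->
        P u x = incrossing) /\
    (forall k, N = Some k -> (3 %| k)%N /\ forall u, t k <= u -> P u x = empty).

Inductive update := UDeadline of T & ext R | UDir of direction.

Definition SafeToOpen (dopen : R) (s : state1) (ct : R) : Prop :=
  forall x, TrackStatus s x = empty \/ lt_ext (Fin (ct + dopen)) (Deadline s x).

Definition generates (dopen W : R) (s : state1) (ct : R) (u : update) : Prop :=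
  match u with
  | UDeadline x v =>
      (* SetDeadline(x) *)
      (TrackStatus s x = coming /\ Deadline s x = Inf /\ v = Fin (ct + W)) \/
      (* ClearDeadline(x) *)
      (TrackStatus s x = empty /\ lt_ext (Deadline s x) Inf /\ v = Inf)
  | UDir d =>
      (* SignalClose(x) *)
      (d = close /\ exists x, Fin ct = Deadline s x) \/
      (* SignalOpen *)
      (d = open /\ Dir s = close /\ SafeToOpen dopen s ct)
  end.

Definition consistent (dopen W : R) (s : state1) (ct : R) : Prop :=
  (forall x v v', generates dopen W s ct (UDeadline x v) ->
                  generates dopen W s ct (UDeadline x v') -> v = v') /\
  (forall d d', generates dopen W s ct (UDir d) ->
                generates dopen W s ct (UDir d') -> d = d').

Definition executes (dopen W : R) (s : state1) (ct : R) (s' : state1) : Prop :=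
  (consistent dopen W s ct ->
     TrackStatus s' = TrackStatus s /\
     (forall x, (forall v, generates dopen W s ct (UDeadline x v) -> Deadline s' x = v) /\
                ((forall v, ~ generates dopen W s ct (UDeadline x v)) ->
                   Deadline s' x = Deadline s x)) /\
     (forall d, generates dopen W s ct (UDir d) -> Dir s' = d) /\
     ((forall d, ~ generates dopen W s ct (UDir d)) -> Dir s' = Dir s)) /\
  (~ consistent dopen W s ct -> s' = s).

Definition changes (s : state1) (u : update) : Prop :=
  match u with
  | UDeadline x v => Deadline s x <> v
  | UDir d => Dir s <> d
  end.

Definition enabled (dopen W : R) (s : state1) (ct : R) : Prop :=
  consistent dopen W s ct /\
  exists u, generates dopen W s ct u /\ changes s u.

(* run of the one-module program Controller (TrackStatus external) *)
Definition is_run (dopen W : R) (Q : R -> state1) : Prop :=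
  piecewise_const Q /\
  (forall t, 0 <= t -> forall s, right_val Q t s -> s <> Q t ->
      executes dopen W (Q t) t s /\ TrackStatus s = TrackStatus (Q t)) /\
  (forall t, 0 < t -> forall s, left_val Q t s -> s <> Q t ->
      Deadline s = Deadline (Q t) /\ Dir s = Dir (Q t)).

Definition fires (dopen W : R) (Q : R -> state1) (t : R) : Prop :=
  exists s, [/\ right_val Q t s, s <> Q t & executes dopen W (Q t) t s].

Definition immediate (dopen W : R) (Q : R -> state1) : Prop :=
  forall t, 0 <= t -> enabled dopen W (Q t) t -> fires dopen W Q t.

End Railroad.

From HB Require Import structures.
From mathcomp Require Import all_boot all_order all_algebra.
From mathcomp Require Import reals.
From mathcomp Require Import boolp classical_sets lra zify.
Set Implicit Arguments. Unset Strict Implicit. Unset Printing Implicit Defensive.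
Import Order.TTheory GRing.Theory Num.Theory.
Local Open Scope ring_scope.

(* The run is given explicitly.  For a track with Train Motion instants
   t_0 < t_1 < ..., Deadline is t_{3i+1} + W on (t_{3i+1}, t_{3i+3}] and infinity
   elsewhere; as W < d_min, such a deadline expires while the train is still coming.
   Dir is close at t > 0 exactly when some deadline expired at an instant d < t and
   SafeToOpen failed throughout [d, t).  These functions are locally constant from
   the left, and from the right they take the values computed by Controller, so they
   form a run in which Controller is immediate.  Uniqueness is a real induction: two
   such runs have the same left limits (only the external TrackStatus may jump from
   the left) and the same right limits (executing Controller is deterministic). *)

Section RightNeighbourhoods.
Variable R : realType.
Implicit Types (p q : R -> Prop) (t : R).

Definition near0r p := exists2 e : R, 0 < e & forall h, 0 < h < e -> p h.

Lemma near0r_impl p q : near0r p -> (forall h, 0 < h -> p h -> q h) -> near0r q.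
Proof.
by case=> e e0 pe pq; exists e => // h /andP[h0 he]; apply: pq (pe _ _); rewrite ?h0.
Qed.

Lemma near0r_and p q : near0r p -> near0r q -> near0r (fun h => p h /\ q h).
Proof.
case=> e1 e1_gt0 p1 [e2 e2_gt0 q2]; exists (Order.min e1 e2).
  by rewrite lt_min e1_gt0.
by move=> h /andP[h0]; rewrite lt_min => /andP[he1 he2]; split; [apply: p1 | apply: q2];
  rewrite h0.
Qed.

Lemma near0r_lt c : 0 < c -> near0r (fun h => h < c).
Proof. by move=> c0; exists c => // h /andP[]. Qed.

Lemma near0r_witness p : near0r p -> exists2 h, 0 < h & p h.
Proof. by case=> e e0 pe; exists (e / 2); [lra | apply: pe; lra]. Qed.

Lemma near0r_below p : near0r p -> near0r (fun h => forall h', 0 < h' <= h -> p h').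
Proof. by case=> e e0 pe; exists e => // h /andP[_ he] h' /andP[h'0 h'h]; apply: pe; lra. Qed.

Lemma near0r_forall (I : finType) (p : I -> R -> Prop) :
  (forall i, near0r (p i)) -> near0r (fun h => forall i, p i h).
Proof.
move=> pi; suff : near0r (fun h => forall i, i \in enum I -> p i h).
  by move=> pe; apply: (near0r_impl pe) => h _ {}pe i; apply: pe; rewrite mem_enum.
elim: (enum I) => [|j s IHs]; first by exists 1.
apply: (near0r_impl (near0r_and (pi j) IHs)) => h _ [pj ps] i.
by rewrite inE => /predU1P[-> // | /ps].
Qed.

Lemma near0r_Fin_neqD (c : ext R) t : near0r (fun h => c <> Fin (t + h)).
Proof.
case: c => [c|]; last by exists 1.
have [ct|tc] := leP c t; first by exists 1 => // h /andP[h0 _] []; lra.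
by exists (c - t) => [|h /andP[h0 he] []]; lra.
Qed.

Lemma near0r_Fin_neqB (c : ext R) t : near0r (fun h => c <> Fin (t - h)).
Proof.
case: c => [c|]; last by exists 1.
have [tc|ct] := leP t c; first by exists 1 => // h /andP[h0 _] []; lra.
by exists (t - c) => [|h /andP[h0 he] []]; lra.
Qed.

Lemma right_valE (X : Type) (f : R -> X) t x :
  right_val f t x <-> near0r (fun h => f (t + h) = x).
Proof.
split=> -[e e0 fe]; exists e => //.
- by move=> h /andP[h0 he]; apply: fe; lra.
- move=> u /andP[tu ute]; have -> : u = t + (u - t) by lra.
  apply: fe; lra.
Qed.

Lemma left_valE (X : Type) (f : R -> X) t x :
  left_val f t x <-> near0r (fun h => f (t - h) = x).
Proof.
split=> -[e e0 fe]; exists e => //.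
- by move=> h /andP[h0 he]; apply: fe; lra.
- move=> u /andP[teu ut]; have -> : u = t - (t - u) by lra.
  apply: fe; lra.
Qed.

Lemma right_val_uniq (X : Type) (f : R -> X) t x y :
  right_val f t x -> right_val f t y -> x = y.
Proof.
move=> /right_valE fx /right_valE fy.
by have [h _ [<- <-]] := near0r_witness (near0r_and fx fy).
Qed.

Lemma left_val_uniq (X : Type) (f : R -> X) t x y :
  left_val f t x -> left_val f t y -> x = y.
Proof.
move=> /left_valE fx /left_valE fy.
by have [h _ [<- <-]] := near0r_witness (near0r_and fx fy).
Qed.

(* By contradiction at the supremum of the initial segment on which Phi holds. *)
Lemma real_ind (Phi : R -> Prop) :
  Phi 0 ->
  (forall m, 0 < m -> (forall a, 0 <= a < m -> Phi a) -> Phi m) ->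
  (forall m, 0 <= m -> (forall a, 0 <= a <= m -> Phi a) -> near0r (fun h => Phi (m + h))) ->
  forall a, 0 <= a -> Phi a.
Proof.
move=> Phi0 Phi_left Phi_right a0 a00; apply: contrapT => Na0.
pose S : set R := fun a => 0 <= a /\ forall b, 0 <= b <= a -> Phi b.
have S0 : S 0.
  by split=> // b; rewrite -eq_le => /eqP <-.
have ubS a : S a -> a <= a0.
  case=> _ Sa; rewrite leNgt; apply/negP => lt.
  by apply: Na0; apply: Sa; rewrite a00 ltW.
have hsS : has_sup S by split; [exists 0 | exists a0 => a /ubS].
set m := sup S.
have m0 : 0 <= m by apply: sup_upper_bound.
have Phi_lt b : 0 <= b < m -> Phi b.
  move=> /andP[b0 bm].
  have [a [_ Sa] ba] := sup_adherent (eps := m - b) ltac:(lra) hsS.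
  by apply: Sa; rewrite b0 /=; rewrite /m in ba; lra.
have Phi_le b : 0 <= b <= m -> Phi b.
  move=> /andP[b0]; rewrite le_eqVlt => /predU1P[-> | bm]; last by apply: Phi_lt; rewrite b0.
  have [-> // | m_neq0] := eqVneq m 0.
  by apply: Phi_left => //; rewrite lt_def m_neq0.
have [e e0 Phi_e] := Phi_right m m0 Phi_le.
have : S (m + e / 2).
  split=> [|b /andP[b0 bme]]; first lra.
  have [bm | mb] := leP b m; first by apply: Phi_le; rewrite b0.
  have -> : b = m + (b - m) by lra.
  apply: Phi_e; lra.
by move/(sup_upper_bound hsS); rewrite -/m; lra.
Qed.

End RightNeighbourhoods.

Section PiecewiseConstant.
Variables (R : realType) (X : Type).
Implicit Types (f : R -> X) (s : seq R).

Lemma path_itv_co_index (a t : R) s : path <%R a s -> a <= t < last a s ->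
  exists2 i, (i < size s)%N & nth 0 (a :: s) i <= t < nth 0 (a :: s) i.+1.
Proof.
elim: s a => [|b s IHs] a /=; first by move=> _ /andP[]; lra.
move=> /andP[ab bs] /andP[a_t tl]; have [tb | bt] := ltP t b; first by exists 0%N; rewrite ?a_t.
by have [i si] := IHs b bs ltac:(by rewrite bt); exists i.+1.
Qed.

Lemma path_itv_oc_index (a t : R) s : path <%R a s -> a < t <= last a s ->
  exists2 i, (i < size s)%N & nth 0 (a :: s) i < t <= nth 0 (a :: s) i.+1.
Proof.
elim: s a => [|b s IHs] a /=; first by move=> _ /andP[]; lra.
move=> /andP[ab bs] /andP[a_t tl]; have [tb | bt] := leP t b; first by exists 0%N; rewrite ?a_t.
by have [i si] := IHs b bs ltac:(by rewrite bt); exists i.+1.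
Qed.

Lemma piecewise_const_right f t : piecewise_const f -> 0 <= t -> exists x, right_val f t x.
Proof.
move=> fpc t0; have [s [s_sorted [s_last fs]]] := fpc (t + 1) ltac:(lra).
have [i si] := path_itv_co_index (t := t) s_sorted ltac:(rewrite s_last; lra).
set lo := nth 0 (0 :: s) i; set hi := nth 0 (0 :: s) i.+1 => /andP[lot thi].
exists (f ((t + hi) / 2)), (hi - t) => [|u /andP[tu uhi]]; first lra.
by apply: (fs i si); rewrite -/lo -/hi; lra.
Qed.

Lemma piecewise_const_left f t : piecewise_const f -> 0 < t -> exists x, left_val f t x.
Proof.
move=> fpc t0; have [s [s_sorted [s_last fs]]] := fpc t t0.
have [i si] := path_itv_oc_index (t := t) s_sorted ltac:(rewrite s_last; lra).
set lo := nth 0 (0 :: s) i; set hi := nth 0 (0 :: s) i.+1 => /andP[lot thi].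
exists (f ((t + lo) / 2)), (t - lo) => [|u /andP[tlu ut]]; first lra.
by apply: (fs i si); rewrite -/lo -/hi; lra.
Qed.

Definition const_on_partition f s tau :=
  sorted <%R (0 :: s) /\ last 0 s = tau /\
  forall i, (i < size s)%N ->
    forall u v, nth 0 (0 :: s) i < u < nth 0 (0 :: s) i.+1 ->
                nth 0 (0 :: s) i < v < nth 0 (0 :: s) i.+1 -> f u = f v.

Lemma const_on_partition_rcons f s a b : const_on_partition f s a -> a < b ->
  (forall u v, a < u < b -> a < v < b -> f u = f v) -> const_on_partition f (rcons s b) b.
Proof.
move=> [s_sorted [s_last fs]] ab fab; split; last split.
- by rewrite /= rcons_path s_last ab andbT.
- by rewrite last_rcons.
move=> i; rewrite size_rcons ltnS leq_eqVlt -cats1 -cat_cons !nth_cat /=.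
case/predU1P=> [-> | isz]; last by rewrite !ltnS (ltnW isz) isz; apply: fs.
have -> : nth 0 (0 :: s) (size s) = a by rewrite -s_last; have := nth_last 0 (0 :: s).
by rewrite ltnSn ltnn subnn.
Qed.

Lemma piecewise_const_local f :
  (forall t, 0 <= t -> exists x, right_val f t x) ->
  (forall t, 0 < t -> exists x, left_val f t x) -> piecewise_const f.
Proof.
move=> f_right f_left.
suff partition : forall tau, 0 <= tau -> exists s, const_on_partition f s tau.
  by move=> tau /ltW /partition.
apply: real_ind => [|m m0 IHm|m m0 IHm]; first by exists [::].
- have [x [e e0 fe]] := f_left m m0.
  pose a := if e < m then m - e / 2 else m / 2.
  have [a0 am ame] : [/\ 0 <= a, a < m & m - e <= a].
    by rewrite /a; case: ltP => ?; split; lra.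
  have [s fs] := IHm a ltac:(lra).
  exists (rcons s m); apply: (const_on_partition_rcons fs am) => u v uam vam.
  by rewrite !fe //; lra.
- have [s fs] := IHm m ltac:(lra).
  have [x [e e0 fe]] := f_right m m0.
  exists e => // h /andP[h0 he]; exists (rcons s (m + h)).
  apply: (const_on_partition_rcons fs) => [|u v umh vmh]; first lra.
  by rewrite !fe //; lra.
Qed.

End PiecewiseConstant.

Section Controller.
Variables (R : realType) (T : finType) (dopen W : R).
Implicit Types (s : state1 R T) (ct : R) (Q : R -> state1 R T).

Lemma state1_ext (a b : state1 R T) :
  TrackStatus a = TrackStatus b -> Deadline a = Deadline b -> Dir a = Dir b -> a = b.
Proof. by case: a => ? ? ?; case: b => ? ? ? /= -> -> ->. Qed.

Definition next_deadline (st : status) (d : ext R) ct : ext R :=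
  match st, d with
  | coming, Inf => Fin (ct + W)
  | empty, Fin _ => Inf
  | _, _ => d
  end.

Definition next_dir s ct : direction :=
  if `[< exists x, Fin ct = Deadline s x >] then close
  else if `[< Dir s = close /\ SafeToOpen dopen s ct >] then open else Dir s.

Definition controller_step s ct : state1 R T :=
  State1 (TrackStatus s) [ffun x => next_deadline (TrackStatus s x) (Deadline s x) ct]
    (next_dir s ct).

Lemma generates_deadline s ct x v : generates dopen W s ct (UDeadline x v) ->
  v = next_deadline (TrackStatus s x) (Deadline s x) ct.
Proof. by case=> [[-> [-> ->]] | [-> []]] //; case: (Deadline s x). Qed.

Lemma next_deadline_idle s ct x : (forall v, ~ generates dopen W s ct (UDeadline x v)) ->
  next_deadline (TrackStatus s x) (Deadline s x) ct = Deadline s x.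
Proof.
move=> idle; case Es: (TrackStatus s x); case Ed: (Deadline s x) => [d|] //.
- by case: (idle Inf); right; rewrite Es Ed.
- by case: (idle (Fin (ct + W))); left; rewrite Es Ed.
Qed.

(* SignalClose and SignalOpen are the only possible conflict, and SafeToOpen fails
   at a track whose deadline is now unless the track is empty. *)
Lemma consistent_step s ct : 0 < dopen ->
  (forall x, Deadline s x = Fin ct -> TrackStatus s x <> empty) -> consistent dopen W s ct.
Proof.
move=> dopen_gt0 hit_busy; split=> [x v v' /generates_deadline -> /generates_deadline -> //|].
suff no_conflict : (exists x, Fin ct = Deadline s x) -> ~ SafeToOpen dopen s ct.
  by move=> d d' [[-> close_x] | [-> [_ safe]]] [[-> close_x'] | [-> [_ safe']]] //;
    [case: (no_conflict close_x safe') | case: (no_conflict close_x' safe)].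
move=> [x hit] /(_ x) [|]; first exact: hit_busy.
by rewrite -hit /=; lra.
Qed.

Lemma executes_step s ct :
  consistent dopen W s ct -> executes dopen W s ct (controller_step s ct).
Proof.
move=> cons; split=> // _; split=> //; split.
  move=> x; rewrite ffunE; split=> [v /generates_deadline -> // | idle].
  exact: next_deadline_idle.
have gen_close : (exists x, Fin ct = Deadline s x) -> generates dopen W s ct (UDir R T close).
  by left.
have gen_open : Dir s = close /\ SafeToOpen dopen s ct -> generates dopen W s ct (UDir R T open).
  by right.
rewrite /= /next_dir; split=> [d gen_d | idle].
- case: asboolP => [/gen_close gen_c | no_close]; first exact: cons.2 _ _ gen_c gen_d.
  case: gen_d => [[_ /no_close //] | [-> open_cond]].
  by rewrite asboolT.
- case: asboolP => [/gen_close /idle // | _].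
  by case: asboolP => [/gen_open /idle // | _].
Qed.

Lemma executes_det s ct a b : executes dopen W s ct a -> executes dopen W s ct b -> a = b.
Proof.
move=> [exec_a incons_a] [exec_b incons_b].
have [cons | /[dup] /incons_a -> /incons_b -> //] := pselect (consistent dopen W s ct).
have [TSa [Da [Dira Dira']]] := exec_a cons; have [TSb [Db [Dirb Dirb']]] := exec_b cons.
apply: state1_ext; first by rewrite TSa TSb.
- apply/ffunP => x.
  have [[v gen] | idle] := pselect (exists v, generates dopen W s ct (UDeadline x v)).
    by rewrite ((Da x).1 v gen) ((Db x).1 v gen).
  have {}idle v : ~ generates dopen W s ct (UDeadline x v) by move=> gen; apply: idle; exists v.
  by rewrite ((Da x).2 idle) ((Db x).2 idle).
- have [[d gen] | idle] := pselect (exists d, generates dopen W s ct (UDir R T d)).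
    by rewrite (Dira d gen) (Dirb d gen).
  have {}idle d : ~ generates dopen W s ct (UDir R T d) by move=> gen; apply: idle; exists d.
  by rewrite (Dira' idle) (Dirb' idle).
Qed.

Lemma executes_disabled s ct : ~ enabled dopen W s ct -> executes dopen W s ct s.
Proof.
move=> disabled; split=> // cons.
have unchanged u : generates dopen W s ct u -> ~ changes s u.
  by move=> gen chg; apply: disabled; split=> //; exists u.
split=> //; split=> [x | ]; first by split=> // v /unchanged /contrapT.
by split=> // d /unchanged /contrapT.
Qed.

Lemma executes_enabled_neq s s' ct :
  enabled dopen W s ct -> executes dopen W s ct s' -> s' <> s.
Proof.
move=> [cons [u [gen chg]]] [/(_ cons) [_ [Ds' [Dirs' _]]] _] s's; subst s'.
by case: u gen chg => [x v | d] gen /=; [rewrite ((Ds' x).1 v gen) | rewrite (Dirs' d gen)].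
Qed.

Lemma run_right_executes Q t s : is_run dopen W Q -> immediate dopen W Q -> 0 <= t ->
  right_val Q t s -> executes dopen W (Q t) t s.
Proof.
move=> [_ [run_right _]] imm t0 rs.
have [Es | neq] := pselect (s = Q t); last by case: (run_right t t0 s rs neq).
subst s; apply: executes_disabled => /(imm t t0) [s' [rs' neq' _]].
by apply: neq'; rewrite -(right_val_uniq rs rs').
Qed.

Lemma run_left_internal Q t s : is_run dopen W Q -> 0 < t -> left_val Q t s ->
  Deadline s = Deadline (Q t) /\ Dir s = Dir (Q t).
Proof.
move=> [_ [_ run_left]] t0 ls.
by have [-> // | neq] := pselect (s = Q t); apply: run_left.
Qed.

Lemma run_uniq Q1 Q2 : is_run dopen W Q1 -> is_run dopen W Q2 ->
  immediate dopen W Q1 -> immediate dopen W Q2 -> Q1 0 = Q2 0 ->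
  (forall t, 0 <= t -> TrackStatus (Q1 t) = TrackStatus (Q2 t)) ->
  forall t, 0 <= t -> Q1 t = Q2 t.
Proof.
move=> run1 run2 imm1 imm2 Q12_0 Q12_status.
apply: real_ind => // [m m0 IHm | m m0 IHm].
- have [s1 ls1] := piecewise_const_left run1.1 m0.
  have [s2 ls2] := piecewise_const_left run2.1 m0.
  have s12 : s1 = s2.
    move: (ls1) (ls2) => /left_valE l1 /left_valE l2.
    have [h h0 [[<- <-] hm]] := near0r_witness (near0r_and (near0r_and l1 l2) (near0r_lt m0)).
    by apply: IHm; lra.
  have [D1 Dir1] := run_left_internal run1 m0 ls1.
  have [D2 Dir2] := run_left_internal run2 m0 ls2.
  by apply: state1_ext; rewrite ?Q12_status ?ltW // -?D1 -?D2 -?Dir1 -?Dir2 s12.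
- have [s1 rs1] := piecewise_const_right run1.1 m0.
  have [s2 rs2] := piecewise_const_right run2.1 m0.
  have s12 : s1 = s2.
    apply: (executes_det (run_right_executes run1 imm1 m0 rs1)).
    by rewrite IHm ?m0 ?lexx //; apply: run_right_executes.
  move: rs1 rs2 => /right_valE rs1 /right_valE rs2.
  by apply: (near0r_impl (near0r_and rs1 rs2)) => h _ [-> ->].
Qed.

End Controller.

Definition in_sched (N : option nat) (j : nat) : bool :=
  if N is Some k then (j <= k)%N else true.

(* The Train Motion requirement for a single track with status [st]: [tau] lists
   the instants t_0 < t_1 < ..., and [N = Some k] when the list stops at t_k. *)
Definition motion_schedule (R : realType) (dmin dmax : R) (st : R -> status)
    (tau : nat -> R) (N : option nat) : Prop :=
  tau 0%N = 0 /\
  (forall j, in_sched N j.+1 -> tau j < tau j.+1) /\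
  (forall i, in_sched N (3 * i).+1 -> forall u, tau (3 * i)%N <= u < tau (3 * i).+1 ->
     st u = empty) /\
  (forall i, in_sched N (3 * i).+2 ->
     dmin <= tau (3 * i).+2 - tau (3 * i).+1 <= dmax /\
     forall u, tau (3 * i).+1 <= u < tau (3 * i).+2 -> st u = coming) /\
  (forall i, in_sched N (3 * i).+3 -> forall u, tau (3 * i).+2 <= u < tau (3 * i).+3 ->
     st u = incrossing) /\
  (forall k, N = Some k -> (3 %| k)%N /\ forall u, tau k <= u -> st u = empty).

Lemma train_motion_schedule (R : realType) (T : finType) (dmin dmax : R)
    (P : R -> {ffun T -> status}) :
  train_motion dmin dmax P ->
  exists tau N, forall x, motion_schedule dmin dmax (fun u => P u x) (tau x) (N x).
Proof.
move=> motion; have [tau sched_tau] := choice motion; have [N sched] := choice sched_tau.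
by exists tau, N.
Qed.

Section Track.
Variables (R : realType) (dmin dmax W : R) (st : R -> status) (tau : nat -> R)
  (N : option nat).
Hypotheses (W_gt0 : 0 < W) (W_lt_dmin : W < dmin)
  (sched : motion_schedule dmin dmax st tau N).
Local Notation inS := (in_sched N).
Implicit Types (i j k : nat) (t u : R).

Lemma tau0 : tau 0%N = 0.
Proof. by case: sched. Qed.

Lemma tau_ltS j : inS j.+1 -> tau j < tau j.+1.
Proof. by case: sched => _ [tau_lt _]; apply: tau_lt. Qed.

Lemma status_empty i u : inS (3 * i).+1 -> tau (3 * i)%N <= u < tau (3 * i).+1 -> st u = empty.
Proof. by case: sched => _ [_ [sched_empty _]] /sched_empty; apply. Qed.

Lemma coming_dmin i : inS (3 * i).+2 -> dmin <= tau (3 * i).+2 - tau (3 * i).+1.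
Proof. by case: sched => _ [_ [_ [sched_coming _]]] /sched_coming [/andP[]]. Qed.

Lemma status_coming i u : inS (3 * i).+2 -> tau (3 * i).+1 <= u < tau (3 * i).+2 ->
  st u = coming.
Proof. by case: sched => _ [_ [_ [sched_coming _]]] /sched_coming [_]; apply. Qed.

Lemma status_incrossing i u : inS (3 * i).+3 -> tau (3 * i).+2 <= u < tau (3 * i).+3 ->
  st u = incrossing.
Proof. by case: sched => _ [_ [_ [_ [sched_incrossing _]]]] /sched_incrossing; apply. Qed.

Lemma sched_last_dvd k : N = Some k -> (3 %| k)%N.
Proof. by case: sched => _ [_ [_ [_ [_ sched_last]]]] /sched_last []. Qed.

Lemma status_after_last k u : N = Some k -> tau k <= u -> st u = empty.
Proof. by case: sched => _ [_ [_ [_ [_ sched_last]]]] /sched_last [_]; apply. Qed.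

Lemma in_sched0 : inS 0.
Proof. by rewrite /in_sched; case: N. Qed.

Lemma in_sched_le j j' : (j <= j')%N -> inS j' -> inS j.
Proof. by rewrite /in_sched; case: N => // k /leq_trans; apply. Qed.

Lemma in_sched_last j : inS j -> ~ inS j.+1 -> N = Some j.
Proof.
by rewrite /in_sched; case: N => [k|] // jk /negP; rewrite -ltnNge => kj; congr Some; lia.
Qed.

Lemma in_sched_period i : inS (3 * i).+1 -> inS (3 * i).+3.
Proof. by rewrite /in_sched; case EN: N => [k|] //; have := sched_last_dvd EN; lia. Qed.

Lemma tau_lt j j' : inS j' -> (j < j')%N -> tau j < tau j'.
Proof.
elim: j' => // j' IHj' inj'; rewrite ltnS leq_eqVlt => /predU1P[-> | jj']; first exact: tau_ltS.
have := IHj' (in_sched_le (leqnSn _) inj') jj'; have := tau_ltS inj'; lra.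
Qed.

Lemma tau_le j j' : inS j' -> (j <= j')%N -> tau j <= tau j'.
Proof. by move=> inj'; rewrite leq_eqVlt => /predU1P[-> // | /(tau_lt inj') /ltW]. Qed.

Lemma ltn_tau j j' : inS j -> inS j' -> tau j < tau j' -> (j < j')%N.
Proof. by move=> inj inj' tjj'; rewrite ltnNge; apply/negP => /(tau_le inj); lra. Qed.

(* Every period contains a coming phase, of length at least dmin. *)
Lemma tau_period_lb i : inS (3 * i) -> i%:R * dmin <= tau (3 * i)%N.
Proof.
elim: i => [|i IHi] in3i; first by rewrite mul0r muln0 tau0.
have E3 : (3 * i.+1 = (3 * i).+3)%N by lia.
rewrite E3 in in3i *; have in2 : inS (3 * i).+2 by apply: in_sched_le in3i.
have := IHi (in_sched_le (leqW (leqW (leqnSn _))) in3i).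
have := coming_dmin in2; have := tau_ltS in3i.
have := tau_ltS (in_sched_le (leqnSn _) in2).
by rewrite -nat1r mulrDl mul1r; lra.
Qed.

(* No Zeno behaviour: by tau_period_lb only finitely many instants precede t. *)
Lemma exists_phase t : 0 <= t -> exists j, [/\ inS j, tau j <= t & inS j.+1 -> t < tau j.+1].
Proof.
move=> t0; apply: contrapT => no_phase.
have before j : inS j /\ tau j <= t.
  elim: j => [|j [inj tjt]]; first by rewrite in_sched0 tau0.
  apply: contrapT => not_next; apply: no_phase; exists j; split=> // inj1.
  by rewrite ltNge; apply/negP => tj1t; apply: not_next.
have dmin_gt0 : 0 < dmin := lt_trans W_gt0 W_lt_dmin.
have := archi_boundP (divr_ge0 t0 (ltW dmin_gt0)); rewrite ltr_pdivrMr //.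
have [in3i t3i] := before (3 * Num.Def.archi_bound (t / dmin))%N.
by have := tau_period_lb in3i; lra.
Qed.

Lemma exists_phase_left t : 0 < t -> exists j, [/\ inS j, tau j < t & inS j.+1 -> t <= tau j.+1].
Proof.
move=> t0; have [j [inj tjt t_next]] := exists_phase (ltW t0).
have [tj_lt | t_tj] := ltP (tau j) t; first by exists j; split=> // /t_next /ltW.
have Et : t = tau j by apply/eqP; rewrite eq_le tjt t_tj.
case: j inj tjt t_next t_tj Et => [|j] inj _ _ _ Et; first by move: t0; rewrite Et tau0 ltxx.
by exists j; split; rewrite ?Et ?lexx ?tau_ltS //; apply: in_sched_le inj.
Qed.

Definition phase_status j : status :=
  if (j %% 3 == 0)%N then empty else if (j %% 3 == 1)%N then coming else incrossing.

Definition phase_deadline j : ext R :=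
  if (j %% 3 == 0)%N then Inf else Fin (tau (3 * (j %/ 3)).+1 + W).

Lemma mod3_cases j :
  (exists i, j = 3 * i)%N \/ (exists i, j = (3 * i).+1)%N \/ (exists i, j = (3 * i).+2)%N.
Proof.
have : (j %% 3 = 0 \/ j %% 3 = 1 \/ j %% 3 = 2)%N by lia.
by case=> [h | [h | h]]; [left | right; left | right; right]; exists (j %/ 3)%N; lia.
Qed.

Lemma phase_status0 i : phase_status (3 * i) = empty.
Proof. by rewrite /phase_status; have -> : ((3 * i) %% 3 = 0)%N by lia. Qed.

Lemma phase_status1 i : phase_status (3 * i).+1 = coming.
Proof. by rewrite /phase_status; have -> : ((3 * i).+1 %% 3 = 1)%N by lia. Qed.

Lemma phase_status2 i : phase_status (3 * i).+2 = incrossing.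
Proof. by rewrite /phase_status; have -> : ((3 * i).+2 %% 3 = 2)%N by lia. Qed.

Lemma phase_deadline0 i : phase_deadline (3 * i) = Inf.
Proof. by rewrite /phase_deadline; have -> : ((3 * i) %% 3 = 0)%N by lia. Qed.

Lemma phase_deadline1 i : phase_deadline (3 * i).+1 = Fin (tau (3 * i).+1 + W).
Proof.
rewrite /phase_deadline; have -> : ((3 * i).+1 %% 3 = 1)%N by lia.
by have -> : ((3 * i).+1 %/ 3 = i)%N by lia.
Qed.

Lemma phase_deadline2 i : phase_deadline (3 * i).+2 = Fin (tau (3 * i).+1 + W).
Proof.
rewrite /phase_deadline; have -> : ((3 * i).+2 %% 3 = 2)%N by lia.
by have -> : ((3 * i).+2 %/ 3 = i)%N by lia.
Qed.

Lemma phase_status_last k : N = Some k -> phase_status k = empty.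
Proof. by move=> /sched_last_dvd /dvdnP[i ->]; rewrite mulnC phase_status0. Qed.

Definition deadline_window u i := inS (3 * i).+3 /\ tau (3 * i).+1 < u <= tau (3 * i).+3.

Definition deadline u : ext R :=
  if pselect (exists i, deadline_window u i) is left w
  then Fin (tau (3 * sval (cid w)).+1 + W) else Inf.

Lemma deadline_window_uniq u i i' : deadline_window u i -> deadline_window u i' -> i = i'.
Proof.
move=> [in3 /andP[lo hi]] [in3' /andP[lo' hi']].
have := @ltn_tau (3 * i).+1 (3 * i').+3; have := @ltn_tau (3 * i').+1 (3 * i).+3.
have in1 : inS (3 * i).+1 by apply: in_sched_le in3; lia.
have in1' : inS (3 * i').+1 by apply: in_sched_le in3'; lia.
by move=> /(_ in1' in3 ltac:(lra)) ? /(_ in1 in3' ltac:(lra)) ?; lia.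
Qed.

Lemma deadline_in u i : deadline_window u i -> deadline u = Fin (tau (3 * i).+1 + W).
Proof.
move=> wi; rewrite /deadline; case: pselect => [w | []]; last by exists i.
by case: cid => i' /= /(deadline_window_uniq wi) ->.
Qed.

Lemma deadline_out u : (forall i, ~ deadline_window u i) -> deadline u = Inf.
Proof. by move=> no_w; rewrite /deadline; case: pselect => // w; exfalso; case: w => i /no_w. Qed.

Lemma status_phase j u : inS j -> tau j <= u -> (inS j.+1 -> u < tau j.+1) ->
  st u = phase_status j.
Proof.
move=> inj tju u_next; have [inj1 | /(in_sched_last inj) last_j] := pselect (inS j.+1).
  have ju : tau j <= u < tau j.+1 by rewrite tju u_next.
  have [[i Ej] | [[i Ej] | [i Ej]]] := mod3_cases j; subst j.
  - by rewrite phase_status0; apply: status_empty inj1 ju.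
  - by rewrite phase_status1; apply: status_coming inj1 ju.
  - by rewrite phase_status2; apply: status_incrossing inj1 ju.
by rewrite (phase_status_last last_j); apply: status_after_last tju.
Qed.

Lemma deadline_phase j u : inS j -> tau j < u -> (inS j.+1 -> u <= tau j.+1) ->
  deadline u = phase_deadline j.
Proof.
move=> inj tju u_next; have [[i Ej] | [[i Ej] | [i Ej]]] := mod3_cases j; subst j.
- rewrite phase_deadline0; apply: deadline_out => i' [in3' /andP[lo hi]].
  have lt1 : (3 * i < (3 * i').+3)%N by apply: ltn_tau => //; lra.
  have [in1 | /(in_sched_last inj) E] := pselect (inS (3 * i).+1); last first.
    by move: in3'; rewrite /in_sched E; lia.
  have : ((3 * i').+1 < (3 * i).+1)%N.
    by apply: ltn_tau => //; [apply: in_sched_le in3'; lia | have := u_next in1; lra].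
  lia.
- rewrite phase_deadline1; apply: deadline_in; split; first exact: in_sched_period.
  rewrite tju /=; have [in2 | /(in_sched_last inj) /sched_last_dvd] := pselect (inS (3 * i).+2).
    by have := u_next in2; have := tau_ltS (in_sched_period inj); lra.
  lia.
- have in1 : inS (3 * i).+1 by apply: in_sched_le inj; lia.
  rewrite phase_deadline2; apply: deadline_in; split; first exact: in_sched_period.
  by have := tau_ltS inj; have := u_next (in_sched_period in1); lra.
Qed.

Lemma deadline_nonpos u : u <= 0 -> deadline u = Inf.
Proof.
move=> u0; apply: deadline_out => i [in3 /andP[lo _]].
have := @tau_lt 0 (3 * i).+1 ltac:(by apply: in_sched_le in3; lia) isT.
by rewrite tau0; lra.
Qed.

Lemma next_deadline_phase j t :
  next_deadline W (phase_status j) (phase_deadline j) t = phase_deadline j.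
Proof.
have [[i ->] | [[i ->] | [i ->]]] := mod3_cases j;
  by rewrite ?phase_status0 ?phase_status1 ?phase_status2 ?phase_deadline0
    ?phase_deadline1 ?phase_deadline2.
Qed.

(* At the boundary t_j the deadline still belongs to the previous phase, and
   SetDeadline/ClearDeadline move it to the deadline of phase j. *)
Lemma next_deadline_at_tau j : inS j ->
  next_deadline W (phase_status j) (deadline (tau j)) (tau j) = phase_deadline j.
Proof.
case: j => [_ | j inj1]; first by rewrite tau0 deadline_nonpos // phase_status0 phase_deadline0.
have inj : inS j by apply: in_sched_le inj1.
rewrite (deadline_phase inj (tau_ltS inj1)) ?lexx //.
have [[i ->] | [[i ->] | [i ->]]] := mod3_cases j.
- by rewrite phase_status1 phase_deadline0 phase_deadline1.
- by rewrite phase_status2 phase_deadline1 phase_deadline2.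
- have -> : ((3 * i).+3 = 3 * i.+1)%N by lia.
  by rewrite phase_status0 phase_deadline2 phase_deadline0.
Qed.

Lemma track_right t : 0 <= t ->
  near0r (fun h => st (t + h) = st t /\ deadline (t + h) = next_deadline W (st t) (deadline t) t).
Proof.
move=> t0; have [j [inj tjt t_next]] := exists_phase t0.
have st_t : st t = phase_status j by apply: status_phase.
have next_t : next_deadline W (st t) (deadline t) t = phase_deadline j.
  rewrite st_t; have [tj_lt | t_tj] := ltP (tau j) t.
    by rewrite (deadline_phase inj tj_lt) ?next_deadline_phase // => /t_next /ltW.
  have -> : t = tau j by apply/eqP; rewrite eq_le t_tj tjt.
  exact: next_deadline_at_tau.
have near_next : near0r (fun h => inS j.+1 -> t + h < tau j.+1).
  have [/t_next t_lt | not_next] := pselect (inS j.+1); last by exists 1.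
  by exists (tau j.+1 - t) => [|h /andP[h0 h_lt] _]; lra.
apply: (near0r_impl near_next) => h h0 th_next; rewrite next_t st_t; split.
- by apply: status_phase => //; lra.
- by apply: deadline_phase => // [|/th_next]; lra.
Qed.

Lemma track_left t : 0 < t ->
  exists st0, near0r (fun h => st (t - h) = st0 /\ deadline (t - h) = deadline t).
Proof.
move=> t0; have [j [inj tjt t_next]] := exists_phase_left t0.
exists (phase_status j), (t - tau j) => [|h /andP[h0 h_lt]]; first lra.
rewrite (deadline_phase inj tjt t_next); split.
- by apply: status_phase => // [|/t_next]; lra.
- by apply: deadline_phase => // [|/t_next]; lra.
Qed.

Lemma deadline_hit_coming t : deadline t = Fin t -> st t = coming.
Proof.
have [[i wi] | no_w] := pselect (exists i, deadline_window t i); last first.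
  by rewrite deadline_out // => i wi; apply: no_w; exists i.
rewrite (deadline_in wi) => -[Et]; case: wi => in3 /andP[lo _].
have in2 : inS (3 * i).+2 by apply: in_sched_le in3.
apply: (status_coming in2); have := coming_dmin in2.
by have := W_gt0; have := W_lt_dmin; lra.
Qed.

End Track.

Section ControllerRun.
Variables (R : realType) (T : finType) (dopen dmin dmax W : R).
Hypotheses (dopen_gt0 : 0 < dopen) (W_gt0 : 0 < W) (W_lt_dmin : W < dmin).
Variables (P : R -> {ffun T -> status}) (tau : T -> nat -> R) (N : T -> option nat).
Hypothesis sched : forall x, motion_schedule dmin dmax (fun u => P u x) (tau x) (N x).
Variable dir0 : direction.
Implicit Types (t u : R) (x : T).

Local Notation D x := (deadline W (tau x) (N x)).

Definition safe_at t := forall x, P t x = empty \/ lt_ext (Fin (t + dopen)) (D x t).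

Definition signals_close t := exists x, D x t = Fin t.

Definition close_pending t :=
  exists2 d, 0 <= d < t & signals_close d /\ forall u, d <= u < t -> ~ safe_at u.

Definition run_dir t : direction :=
  if t == 0 then dir0 else if `[< close_pending t >] then close else open.

Definition controller_run t : state1 R T := State1 (P t) [ffun x => D x t] (run_dir t).

Lemma track_right_at x t : 0 <= t -> near0r (fun h =>
  P (t + h) x = P t x /\ D x (t + h) = next_deadline W (P t x) (D x t) t).
Proof. exact: track_right W_gt0 W_lt_dmin (sched x) t. Qed.

Lemma unsafe_at t x c : P t x <> empty -> D x t = Fin c -> c <= t + dopen -> ~ safe_at t.
Proof. by move=> busy Dx c_le /(_ x) [// | ]; rewrite Dx /=; lra. Qed.

Lemma unsafe_witness t : ~ safe_at t ->
  exists x c, [/\ P t x <> empty, D x t = Fin c & c <= t + dopen].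
Proof.
move=> /existsNP [x /not_orP [busy not_far]]; exists x.
case: (D x t) not_far => [c|] //= not_far; exists c.
by split=> //; rewrite leNgt; apply/negP.
Qed.

Lemma unsafe_right t : 0 <= t -> ~ safe_at t -> near0r (fun h => ~ safe_at (t + h)).
Proof.
move=> t0 /unsafe_witness [x [c [busy Dx c_le]]].
apply: (near0r_impl (track_right_at x t0)) => h h0 [Pth Dth].
apply: (unsafe_at (x := x) (c := c)); [by rewrite Pth | | lra].
by rewrite Dth Dx; case: (P t x) busy.
Qed.

Lemma signals_close_unsafe t : signals_close t -> ~ safe_at t.
Proof.
move=> [x Dx]; apply: (unsafe_at (c := t) _ Dx); last by rewrite lerDl ltW.
by rewrite (deadline_hit_coming W_gt0 W_lt_dmin (sched x) Dx).
Qed.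

Lemma safe_at0 : safe_at 0.
Proof. by move=> x; right; rewrite (deadline_nonpos W_gt0 W_lt_dmin (sched x)). Qed.

Lemma no_signal_close_right t : 0 <= t -> near0r (fun h => ~ signals_close (t + h)).
Proof.
move=> t0; have no_hit x : near0r (fun h => D x (t + h) <> Fin (t + h)).
  have next_neq := near0r_Fin_neqD (next_deadline W (P t x) (D x t) t) t.
  by apply: (near0r_impl (near0r_and (track_right_at x t0) next_neq)) => h _ [[_ ->]].
by apply: (near0r_impl (near0r_forall no_hit)) => h _ no_hits [x /no_hits].
Qed.

Lemma no_signal_close_left t : 0 < t -> near0r (fun h => ~ signals_close (t - h)).
Proof.
move=> t0; have no_hit x : near0r (fun h => D x (t - h) <> Fin (t - h)).
  have [st0 near_st0] := track_left W_gt0 W_lt_dmin (sched x) t0.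
  have neq := near0r_Fin_neqB (D x t) t.
  by apply: (near0r_impl (near0r_and near_st0 neq)) => h _ [[_ ->]].
by apply: (near0r_impl (near0r_forall no_hit)) => h _ no_hits [x /no_hits].
Qed.

Lemma close_pending0 : ~ close_pending 0.
Proof. by case=> d /andP[d0 d_lt0]; lra. Qed.

Lemma close_pending_right t h : 0 <= t -> 0 < h ->
  (forall h', 0 < h' <= h -> ~ signals_close (t + h')) ->
  (~ safe_at t -> forall h', 0 < h' <= h -> ~ safe_at (t + h')) ->
  close_pending (t + h) <-> signals_close t \/ (close_pending t /\ ~ safe_at t).
Proof.
move=> t0 h0 no_close unsafe_stays; split.
  case=> d /andP[d0 d_th] [close_d unsafe_d].
  have dt : d <= t.
    rewrite leNgt; apply/negP => td; apply: (no_close (d - t)); first lra.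
    by have -> : t + (d - t) = d by lra.
  have [<- | d_neq] := eqVneq d t; [by left | right].
  split; last by apply: unsafe_d; lra.
  exists d; first by rewrite d0 lt_neqAle d_neq.
  by split=> // u /andP[du ut]; apply: unsafe_d; lra.
suff extend d : 0 <= d <= t -> signals_close d -> (forall u, d <= u <= t -> ~ safe_at u) ->
    close_pending (t + h).
  case=> [close_t | [[d /andP[d0 dt] [close_d unsafe_d]] unsafe_t]].
    apply: (extend t) => //; first by rewrite t0 lexx.
    move=> u; rewrite -eq_le => /eqP <-; exact: signals_close_unsafe.
  apply: (extend d) => //; first by rewrite d0 ltW.
  by move=> u /andP[du]; rewrite le_eqVlt => /predU1P[-> // | ut]; apply: unsafe_d; rewrite du.
move=> /andP[d0 dt] close_d unsafe_d; exists d; first by rewrite d0 /=; lra.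
split=> // u /andP[du uth]; have [ut | tu] := leP u t; first by apply: unsafe_d; rewrite du.
have -> : u = t + (u - t) by lra.
by apply: unsafe_stays; [apply: unsafe_d; rewrite dt lexx | lra].
Qed.

Lemma close_pending_near_right t : 0 <= t -> near0r (fun h =>
  close_pending (t + h) <-> signals_close t \/ (close_pending t /\ ~ safe_at t)).
Proof.
move=> t0.
have unsafe_stays : near0r (fun h => ~ safe_at t -> forall h', 0 < h' <= h -> ~ safe_at (t + h')).
  have [safe_t | unsafe_t] := pselect (safe_at t); first by exists 1.
  by apply: (near0r_impl (near0r_below (unsafe_right t0 unsafe_t))).
apply: (near0r_impl (near0r_and (near0r_below (no_signal_close_right t0)) unsafe_stays)).
by move=> h h0 []; apply: close_pending_right.
Qed.

(* Left of t, no deadline expires and SafeToOpen can only turn false (never back),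
   so a closure pending at t - h is still pending at t, and conversely. *)
Lemma close_pending_left t : 0 < t ->
  near0r (fun h => close_pending (t - h) <-> close_pending t).
Proof.
move=> t0; have [st0 near_st0] := choice (fun x => track_left W_gt0 W_lt_dmin (sched x) t0).
have [e e0 near_e] := near0r_and (near0r_and (near0r_forall near_st0)
  (no_signal_close_left t0)) (near0r_lt t0).
have tracks_const u : t - e < u < t -> forall x, P u x = st0 x /\ D x u = D x t.
  move=> ut; have [[tracks _] _] := near_e (t - u) ltac:(lra).
  by rewrite opprB addrC subrK in tracks.
have close_early d : d < t -> signals_close d -> d <= t - e.
  move=> dt close_d; rewrite leNgt; apply/negP => ted.
  have [[_ no_close] _] := near_e (t - d) ltac:(lra).
  by apply: no_close; rewrite opprB addrC subrK.
exists e => // h /andP[h0 he]; split.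
  case=> d /andP[d0 dth] [close_d unsafe_d]; have de := close_early d ltac:(lra) close_d.
  exists d; first by rewrite d0 /=; lra.
  split=> // u /andP[du ut].
  have [uth | thu] := ltP u (t - h); first by apply: unsafe_d; rewrite du.
  have /unsafe_witness [x [c [busy Dx c_le]]] : ~ safe_at (t - (h + e) / 2).
    by apply: unsafe_d; lra.
  have [Pw Dw] := tracks_const (t - (h + e) / 2) ltac:(lra) x.
  have [Pu Du] := tracks_const u ltac:(lra) x.
  by apply: (unsafe_at (x := x) (c := c)); [rewrite Pu -Pw | rewrite Du -Dw | lra].
case=> d /andP[d0 dt] [close_d unsafe_d]; have de := close_early d dt close_d.
exists d; first by rewrite d0 /=; lra.
by split=> // u /andP[du uth]; apply: unsafe_d; rewrite du /=; lra.
Qed.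

Lemma safe_atE t : SafeToOpen dopen (controller_run t) t = safe_at t.
Proof. by rewrite propeqE; split=> safe x; have := safe x; rewrite /= ffunE. Qed.

Lemma signals_closeE t : (exists x, Fin t = Deadline (controller_run t) x) = signals_close t.
Proof.
by rewrite propeqE; split=> -[x Dx]; exists x; move: Dx; rewrite /= ffunE.
Qed.

Lemma next_dir_run t : next_dir dopen (controller_run t) t =
  if `[< signals_close t \/ (close_pending t /\ ~ safe_at t) >] then close else open.
Proof.
rewrite /next_dir safe_atE signals_closeE asbool_or !asbool_and asbool_neg /=.
case: (asboolP (signals_close t)) => //= _.
have [-> | t_neq0] := eqVneq t 0.
  rewrite /run_dir eqxx (asboolF close_pending0) (asboolT safe_at0).
  by case: dir0; rewrite ?(asboolT (erefl close)) //; case: ifP.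
rewrite /run_dir (negbTE t_neq0).
by case: (asboolP (close_pending t)) => _; case: (asboolP (safe_at t)) => _ /=;
  rewrite ?(asboolT (erefl close)) ?(@asboolF (open = close)).
Qed.

Lemma run_dir_right t : 0 <= t ->
  near0r (fun h => run_dir (t + h) = next_dir dopen (controller_run t) t).
Proof.
move=> t0; apply: (near0r_impl (close_pending_near_right t0)) => h h0 pending_iff.
by rewrite next_dir_run /run_dir gt_eqF ?(asbool_equiv_eq pending_iff) //; lra.
Qed.

Lemma run_dir_left t : 0 < t -> near0r (fun h => run_dir (t - h) = run_dir t).
Proof.
move=> t0; apply: (near0r_impl (near0r_and (close_pending_left t0) (near0r_lt t0))).
by move=> h h0 [pending_iff ht]; rewrite /run_dir !gt_eqF ?(asbool_equiv_eq pending_iff) //; lra.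
Qed.

Lemma controller_run_consistent t : consistent dopen W (controller_run t) t.
Proof.
apply: consistent_step => // x; rewrite /= ffunE => Dx.
by rewrite (deadline_hit_coming W_gt0 W_lt_dmin (sched x) Dx).
Qed.

Lemma controller_run_right t : 0 <= t ->
  right_val controller_run t (controller_step dopen W (controller_run t) t).
Proof.
move=> t0; apply/right_valE.
have near_tracks : near0r (fun h => forall x,
    P (t + h) x = P t x /\ D x (t + h) = next_deadline W (P t x) (D x t) t).
  by apply: near0r_forall => x; apply: track_right_at.
apply: (near0r_impl (near0r_and near_tracks (run_dir_right t0))).
move=> h _ [tracks dir_h]; apply: state1_ext => //=.
  by apply/ffunP => x; rewrite (tracks x).1.
by apply/ffunP => x; rewrite !ffunE (tracks x).2.
Qed.

Lemma controller_run_left t : 0 < t -> exists st0,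
  left_val controller_run t (State1 st0 (Deadline (controller_run t)) (Dir (controller_run t))).
Proof.
move=> t0; have [st0 near_st0] := choice (fun x => track_left W_gt0 W_lt_dmin (sched x) t0).
exists [ffun x => st0 x]; apply/left_valE.
apply: (near0r_impl (near0r_and (near0r_forall near_st0) (run_dir_left t0))).
move=> h _ [tracks dir_h]; apply: state1_ext => //=.
  by apply/ffunP => x; rewrite ffunE (tracks x).1.
by apply/ffunP => x; rewrite !ffunE (tracks x).2.
Qed.

Lemma controller_run_is_run : is_run dopen W controller_run.
Proof.
split; [apply: piecewise_const_local | split].
- by move=> t /controller_run_right rv; eexists; apply: rv.
- by move=> t /controller_run_left [st0 lv]; eexists; apply: lv.
- move=> t t0 s /(right_val_uniq (controller_run_right t0)) <- _; split=> //.
  exact/executes_step/controller_run_consistent.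
- by move=> t t0 s ls _; have [st0 /(left_val_uniq ls) ->] := controller_run_left t0.
Qed.

Lemma controller_run_immediate : immediate dopen W controller_run.
Proof.
move=> t t0 enabled_t; have exec_t := executes_step (controller_run_consistent t).
exists (controller_step dopen W (controller_run t) t); split=> //.
- exact: controller_run_right.
- exact: executes_enabled_neq enabled_t exec_t.
Qed.

Lemma controller_run0 : controller_run 0 = State1 (P 0) [ffun=> Inf] dir0.
Proof.
rewrite /controller_run /run_dir eqxx; congr State1.
by apply/ffunP => x; rewrite !ffunE (deadline_nonpos W_gt0 W_lt_dmin (sched x)).
Qed.

End ControllerRun.

Theorem mainTheorem16 (R : realType) (T : finType)
    (d_close d_open d_min d_max : R)
    (Hclose : 0 < d_close) (Hopen : 0 < d_open) (Hmin : 0 < d_min) (Hmax : 0 < d_max)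
    (Hcm : d_close < d_min) (Hmm : d_min <= d_max)
    (P : R -> {ffun T -> status})
    (HP : piecewise_const P) (HTM : train_motion d_min d_max P)
    (A : fullState R T) (HA : initial A)
    (HAP : fTrackStatus A = P 0 /\ fCT A = 0) :
  let W := d_min - d_close in
  exists Q : R -> state1 R T,
    [/\ is_run d_open W Q, Q 0 = reduct1 A,
        (forall t, 0 <= t -> TrackStatus (Q t) = P t),
        immediate d_open W Q &
        forall Q' : R -> state1 R T,
          [/\ is_run d_open W Q', Q' 0 = reduct1 A,
              (forall t, 0 <= t -> TrackStatus (Q' t) = P t) &
              immediate d_open W Q'] ->
          forall t, 0 <= t -> Q' t = Q t].
Proof.
move=> W; have W_gt0 : 0 < W by rewrite subr_gt0.
have W_lt_dmin : W < d_min by rewrite /W; lra.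
have [tau [N sched]] := train_motion_schedule HTM.
pose Q := controller_run d_open W P tau N (fDir A).
have run : is_run d_open W Q := controller_run_is_run Hopen W_gt0 W_lt_dmin sched _.
have imm : immediate d_open W Q :=
  controller_run_immediate Hopen W_gt0 W_lt_dmin sched (dir0 := fDir A).
have Q0 : Q 0 = reduct1 A.
  rewrite /Q (controller_run0 d_open W_gt0 W_lt_dmin sched) /reduct1 -HAP.1; congr State1.
  by apply/ffunP => x; rewrite ffunE; case: (HA x).
exists Q; split=> // Q' [run' Q'0 status' imm'] t t0.
apply: (run_uniq run' run imm' imm _ _ t0) => [|u u0]; first by rewrite Q'0 Q0.
by rewrite status'.
Qed.
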